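(* Let $k\in\mathbb{N}_0$, $n=2k+1$, $a<b$, $v\in\mathbb{R}$ constant, and $T>0$. For integers $N\ge1$ let $h=(b-a)/N$ and grid points $x_j=a+jh$. Consider the periodic advection equation $\phi_t+v\phi_x=0$ on $[a,b]$ with periodic boundary conditions and $(b-a)$-periodic initial condition $\phi_{IC}\in C^{k+1}$ (extended periodically). Define the jet scheme $\phi_0=\phi_{IC}$, $\phi_{m+1}=P_k^+(A\phi_m)$, where $(A\phi)(x)=\phi(x-v\Delta t)$ (periodic shift) and $P_k^+$ is the periodic piecewise degree-$n$ Hermite interpolation on the grid $\{x_j\}$ using derivatives up to order $k$ at grid points. Assume the time step satisfies $\Delta t\ge c\,h^{k+1}$ for a constant $c>0$ independent of $h$. Then there is a constant $M$, depending on $k,a,b,v,T,c,\phi_{IC}$ but not on $h$ (or $N$) or $m$, such that for all $m$ with $0\le m\Delta t\le T$: $$\|\phi_m^{(\ell)}\|_{L^\infty(a,b)}\le M\ \ (0\le\ell\le k),\qquad \|\phi_m^{(k+1)}\|_{L^2(a,b)}\le M.$$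
   Context: $f^{(\ell)}$ denotes the $\ell$-th derivative; for the piecewise polynomial $\phi_m$ (which is $C^k$ and periodic), $\phi_m^{(k+1)}$ is defined cellwise. The periodic Hermite interpolation $P_k^+g$ of a $(b-a)$-periodic $C^k$ function $g$ is the function which on each cell $[x_j,x_{j+1}]$ equals the polynomial of degree $\le n$ matching $g^{(\ell)}(x_j)$ and $g^{(\ell)}(x_{j+1})$ for $\ell=0,\dots,k$. *)

From Stdlib Require Import Reals Lra Lia.
Open Scope R_scope.

Definition is_poly_le (n : nat) (f : R -> R) : Prop :=
  exists c : nat -> R, forall x, f x = sum_f_R0 (fun i => c i * x ^ i) n.

Definition deriv_tower (K : nat) (D : nat -> R -> R) : Prop :=
  forall l x, (l <= K)%nat -> derivable_pt_lim (D l) x (D (S l) x).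

Definition mesh (a b : R) (N : nat) : R := (b - a) / INR N.
Definition grid (a b : R) (N : nat) (j : nat) : R := a + INR j * mesh a b N.

(* Phi_old l, Phi_new l stand for the l-th derivative of phi_m, phi_{m+1}
   (l <= k; l = k+1 is the cellwise derivative).
   phi_{m+1} = P_k^+ (A phi_m) with (A phi)(x) = phi(x - v dt):
   on each cell [x_j, x_{j+1}] phi_{m+1} is the polynomial of degree
   <= 2k+1 whose derivatives of order <= k at x_j, x_{j+1} match those of
   A phi_m, and phi_{m+1} is extended (b-a)-periodically. *)
Definition jet_step (k : nat) (a b v dt : R) (N : nat)
    (Phi_old Phi_new : nat -> R -> R) : Prop :=
  (forall l x, (l <= S k)%nat -> Phi_new l (x + (b - a)) = Phi_new l x) /\
  (forall j, (j < N)%nat ->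
     exists P : nat -> R -> R,
       is_poly_le (2 * k + 1) (P 0%nat) /\
       deriv_tower (S k) P /\
       (forall l x, (l <= k)%nat ->
          grid a b N j <= x <= grid a b N (S j) -> Phi_new l x = P l x) /\
       (forall x, grid a b N j < x < grid a b N (S j) ->
          Phi_new (S k) x = P (S k) x) /\
       (forall l, (l <= k)%nat ->
          P l (grid a b N j) = Phi_old l (grid a b N j - v * dt) /\
          P l (grid a b N (S j)) = Phi_old l (grid a b N (S j) - v * dt))).

From Stdlib Require Import Reals Lra Lia ZArith ClassicalEpsilon FunctionalExtensionality.
Open Scope R_scope.

(* On a cell [x_j, x_{j+1}] the new iterate is the Hermite interpolant P of the shifted old
   iterate R, which is C^{k+1} on either side of a single breakpoint and has matching jets
   there.  The error R - P vanishes to order k at both ends of the cell, so k+1 integrations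
   by parts make R^{(k+1)} - P^{(k+1)} orthogonal to polynomials of degree <= k, in particular
   to P^{(k+1)}: the energy int (phi^{(k+1)})^2 does not increase.  The same integrations by
   parts against (x - x_j)^i / i! show that the mean of phi moves by O(h^{k+1} (1 + energy))
   per step, and the CFL-type condition dt >= c h^{k+1} allows at most T / (c h^{k+1}) steps,
   so the mean stays bounded.  Bounded energy and mean bound every derivative of order <= k:
   the k-th through its oscillation, controlled by the energy, and the lower ones, which are
   periodic and hence of zero mean (except phi itself), through the mean value theorem. *)

Definition integrable (f : R -> R) (a b : R) : Prop := inhabited (Riemann_integrable f a b).

(* A total [RiemannInt]; its value is unspecified when [f] is not integrable on [a, b]. *)
Definition integral (f : R -> R) (a b : R) : R :=
  epsilon (inhabits 0) (fun r => exists pr : Riemann_integrable f a b, RiemannInt pr = r).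

Lemma integral_eq_RiemannInt f a b (pr : Riemann_integrable f a b) :
  integral f a b = RiemannInt pr.
Proof.
  unfold integral.
  destruct (epsilon_spec (inhabits 0)
              (fun r => exists pr : Riemann_integrable f a b, RiemannInt pr = r)) as [pr' <-].
  - exists (RiemannInt pr), pr; reflexivity.
  - apply RiemannInt_P5.
Qed.

Lemma integrable_continuity f a b : a <= b -> continuity f -> integrable f a b.
Proof. intros Hab Cf; constructor; apply continuity_implies_RiemannInt; auto. Qed.

Lemma integral_chasles f a b c : integrable f a b -> integrable f b c ->
  integrable f a c /\ integral f a c = integral f a b + integral f b c.
Proof.
  intros [p1] [p2]. pose (p3 := RiemannInt_P24 p1 p2). split; [constructor; exact p3|].
  rewrite (integral_eq_RiemannInt _ _ _ p1), (integral_eq_RiemannInt _ _ _ p2),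
    (integral_eq_RiemannInt _ _ _ p3).
  symmetry; apply RiemannInt_P26.
Qed.

Lemma integrable_subinterval f a b c d :
  integrable f a b -> a <= c -> c <= d -> d <= b -> integrable f c d.
Proof.
  intros [p] Hac Hcd Hdb. constructor.
  exact (RiemannInt_P23 (RiemannInt_P22 p (conj (Rle_trans _ _ _ Hac Hcd) Hdb)) (conj Hac Hcd)).
Qed.

Lemma integral_linear f g a b l : integrable f a b -> integrable g a b ->
  integrable (fun x => f x + l * g x) a b /\
  integral (fun x => f x + l * g x) a b = integral f a b + l * integral g a b.
Proof.
  intros [p1] [p2]. pose (p3 := RiemannInt_P10 l p1 p2). split; [constructor; exact p3|].
  rewrite (integral_eq_RiemannInt _ _ _ p1), (integral_eq_RiemannInt _ _ _ p2),
    (integral_eq_RiemannInt _ _ _ p3).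
  apply RiemannInt_P13.
Qed.

Lemma integral_ext_open f g a b : a <= b -> integrable f a b -> integrable g a b ->
  (forall x, a < x < b -> f x = g x) -> integral f a b = integral g a b.
Proof.
  intros Hab [p1] [p2] E.
  rewrite (integral_eq_RiemannInt _ _ _ p1), (integral_eq_RiemannInt _ _ _ p2).
  apply RiemannInt_P18; auto.
Qed.

Lemma integral_le f g a b : a <= b -> integrable f a b -> integrable g a b ->
  (forall x, a < x < b -> f x <= g x) -> integral f a b <= integral g a b.
Proof.
  intros Hab [p1] [p2] E.
  rewrite (integral_eq_RiemannInt _ _ _ p1), (integral_eq_RiemannInt _ _ _ p2).
  apply RiemannInt_P19; auto.
Qed.

Lemma integral_const c a b :
  integrable (fun _ => c) a b /\ integral (fun _ => c) a b = c * (b - a).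
Proof.
  split; [constructor; exact (RiemannInt_P14 a b c)|].
  change (integral (fct_cte c) a b = c * (b - a)).
  rewrite (integral_eq_RiemannInt (fct_cte c) _ _ (RiemannInt_P14 a b c)).
  apply RiemannInt_P15.
Qed.

Lemma integral_zero a b : integral (fun _ => 0) a b = 0.
Proof. rewrite (proj2 (integral_const 0 a b)); ring. Qed.

Lemma integral_nonneg f a b : a <= b -> continuity f -> (forall x, 0 <= f x) ->
  0 <= integral f a b.
Proof.
  intros Hab Cf Hf. rewrite <- (integral_zero a b).
  apply integral_le; auto; [apply integral_const | apply integrable_continuity; auto].
Qed.

Lemma integral_subinterval_le g a c d b : a <= c -> c <= d -> d <= b ->
  continuity g -> (forall t, 0 <= g t) -> integral g c d <= integral g a b.
Proof.
  intros Hac Hcd Hdb Cg Pg.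
  destruct (integral_chasles g a c d) as [Iad Ead]; try (apply integrable_continuity; auto; lra).
  destruct (integral_chasles g a d b) as [_ Eab]; auto;
    try (apply integrable_continuity; auto; lra).
  rewrite Eab, Ead.
  assert (0 <= integral g a c) by (apply integral_nonneg; auto).
  assert (0 <= integral g d b) by (apply integral_nonneg; auto). lra.
Qed.

(* [f - g] is a step function with a single step, of height zero. *)
Lemma integrable_ext_open f g a b : a <= b -> integrable g a b ->
  (forall x, a < x < b -> f x = g x) -> integrable f a b.
Proof.
  intros Hab [pg] Heq.
  set (w := fun x => f x - g x).
  assert (Sw : IsStepFun w a b).
  { exists (cons a (cons b nil)), (cons 0 nil). repeat split.
    - intros i Hi; simpl in Hi; destruct i; simpl; [lra | lia].
    - simpl; rewrite Rmin_left; auto.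
    - simpl; rewrite Rmax_right; auto.
    - intros i Hi; simpl in Hi; destruct i; [|lia]. simpl. intros x [Hx1 Hx2].
      unfold w; rewrite Heq; [ring|lra]. }
  assert (pw : Riemann_integrable w a b).
  { intro eps. exists (mkStepFun Sw), (mkStepFun (StepFun_P4 a b 0)). split.
    - intros t _. simpl. unfold fct_cte. rewrite Rminus_diag, Rabs_R0. lra.
    - rewrite StepFun_P18, Rmult_0_l, Rabs_R0. apply cond_pos. }
  constructor. refine (Riemann_integrable_ext f _ (RiemannInt_P10 1 pg pw)).
  intros; unfold w; ring.
Qed.

Lemma integral_derivative G g a b : a <= b ->
  (forall x, a <= x <= b -> derivable_pt_lim G x (g x)) ->
  (forall x, a <= x <= b -> continuity_pt g x) -> integral g a b = G b - G a.
Proof.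
  intros Hab HD HC.
  assert (A1 := RiemannInt_P29 Hab HC).
  assert (A2 : antiderivative g G a b).
  { split; auto. intros x Hx. exists (exist _ (g x) (HD x Hx)).
    symmetry. apply derive_pt_eq_0, HD; auto. }
  destruct (antiderivative_Ucte g _ _ a b A1 A2) as [c Hc].
  rewrite (integral_eq_RiemannInt _ _ _ (continuity_implies_RiemannInt Hab HC)).
  rewrite (RiemannInt_P20 Hab (FTC_P1 Hab HC)).
  rewrite (Hc b), (Hc a); [ring | lra | lra].
Qed.

Lemma continuity_sqr f : continuity f -> continuity (fun x => f x ^ 2).
Proof.
  intros Cf. replace (fun x => f x ^ 2) with (fun x => f x * f x)
    by (apply functional_extensionality; intros; ring).
  apply continuity_mult; auto.
Qed.

(* AM-GM: [|E q| <= C |E| <= C (1 + E^2) / 2]. *)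
Lemma abs_integral_mul_le E q C u v : u <= v -> continuity E -> continuity q ->
  (forall x, u <= x <= v -> Rabs (q x) <= C) ->
  Rabs (integral (fun x => E x * q x) u v) <=
    C / 2 * (v - u) + C / 2 * integral (fun x => E x ^ 2) u v.
Proof.
  intros Huv CE Cq Hq.
  assert (CE2 := continuity_sqr E CE).
  assert (Pointwise : forall x, u <= x <= v ->
    Rabs (E x * q x) <= C / 2 + C / 2 * E x ^ 2).
  { intros x Hx. assert (HqC := Hq x Hx).
    assert (HC : 0 <= C) by (eapply Rle_trans; eauto; apply Rabs_pos).
    assert (0 <= (Rabs (E x) - 1) ^ 2) by apply pow2_ge_0.
    rewrite Rabs_mult, <- (pow2_abs (E x)).
    assert (Rabs (E x) * Rabs (q x) <= Rabs (E x) * C)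
      by (apply Rmult_le_compat_l; auto; apply Rabs_pos).
    nra. }
  destruct (integral_linear (fun _ => C / 2) (fun x => E x ^ 2) u v (C / 2)) as [Ib Eb];
    [apply integral_const | apply integrable_continuity; auto |].
  rewrite (proj2 (integral_const _ _ _)) in Eb.
  assert (IEq : integrable (fun x => E x * q x) u v)
    by (apply integrable_continuity; auto; apply continuity_mult; auto).
  destruct (integral_linear (fun _ => 0) (fun x => C / 2 + C / 2 * E x ^ 2) u v (-1))
    as [Ib' Eb']; [apply integral_const | auto |].
  rewrite integral_zero in Eb'.
  apply Rabs_le; split.
  - assert (integral (fun x => 0 + -1 * (C / 2 + C / 2 * E x ^ 2)) u v
              <= integral (fun x => E x * q x) u v).
    { apply integral_le; auto. intros x Hx.
      assert (HP := Pointwise x ltac:(lra)). revert HP; unfold Rabs; destruct Rcase_abs; lra. }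
    lra.
  - rewrite <- Eb. apply integral_le; auto. intros x Hx.
    assert (HP := Pointwise x ltac:(lra)). revert HP; unfold Rabs; destruct Rcase_abs; lra.
Qed.

Lemma integral_sqr_decomposition f g u v : u <= v -> continuity f -> continuity g ->
  integral (fun x => f x ^ 2) u v =
  integral (fun x => g x ^ 2) u v + 2 * integral (fun x => (f x - g x) * g x) u v
  + integral (fun x => (f x - g x) ^ 2) u v.
Proof.
  intros Huv Cf Cg.
  assert (Cd : continuity (fun x => f x - g x)) by (apply continuity_minus; auto).
  assert (Ig : integrable (fun x => g x ^ 2) u v)
    by (apply integrable_continuity, continuity_sqr; auto).
  assert (Idg : integrable (fun x => (f x - g x) * g x) u v)
    by (apply integrable_continuity, continuity_mult; auto).
  assert (Id : integrable (fun x => (f x - g x) ^ 2) u v)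
    by (apply integrable_continuity, continuity_sqr; auto).
  destruct (integral_linear _ _ u v 2 Ig Idg) as [I1 E1].
  destruct (integral_linear _ _ u v 1 I1 Id) as [_ E2].
  transitivity (integral (fun x => g x ^ 2 + 2 * ((f x - g x) * g x) + 1 * (f x - g x) ^ 2) u v).
  - f_equal. apply functional_extensionality; intros; ring.
  - rewrite E2, E1; ring.
Qed.

Definition has_derivative (f f' : R -> R) : Prop := forall x, derivable_pt_lim f x (f' x).

Lemma has_derivative_continuity f f' : has_derivative f f' -> continuity f.
Proof. intros Hf x. apply derivable_continuous_pt. exists (f' x); apply Hf. Qed.

Lemma deriv_tower_continuity K D : deriv_tower K D ->
  forall l, (l <= K)%nat -> continuity (D l).
Proof. intros HD l Hl. apply (has_derivative_continuity (D l) (D (S l))); intro x; auto. Qed.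

Lemma deriv_tower_continuity_top K D : deriv_tower K D -> continuity (D (S K)) ->
  forall l, (l <= S K)%nat -> continuity (D l).
Proof.
  intros HD Ctop l Hl. destruct (Nat.eq_dec l (S K)) as [->|]; auto.
  apply (deriv_tower_continuity K); auto; lia.
Qed.

Lemma derivable_pt_lim_shift f x t l : derivable_pt_lim f (x - t) l ->
  derivable_pt_lim (fun y => f (y - t)) x l.
Proof.
  intros H eps He. destruct (H eps He) as [d Hd]. exists d. intros hh H1 H2.
  replace (x + hh - t) with (x - t + hh) by ring. apply Hd; auto.
Qed.

Lemma continuity_shift f t : continuity f -> continuity (fun x => f (x - t)).
Proof.
  intros Cf x. apply (continuity_pt_comp (fun x => x - t) f); [|apply Cf].
  apply continuity_pt_minus; [apply derivable_continuous_pt, derivable_pt_id|].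
  apply continuity_pt_const; intros ? ?; auto.
Qed.

Lemma deriv_tower_shift K D t : deriv_tower K D -> deriv_tower K (fun l x => D l (x - t)).
Proof. intros HD l x Hl. apply derivable_pt_lim_shift, HD; auto. Qed.

Lemma integration_by_parts u u' w w' a b : a <= b ->
  has_derivative u u' -> has_derivative w w' -> continuity u' -> continuity w' ->
  integral (fun x => u' x * w x) a b = u b * w b - u a * w a - integral (fun x => u x * w' x) a b.
Proof.
  intros Hab Hu Hw Cu Cw.
  assert (Cu0 := has_derivative_continuity _ _ Hu).
  assert (Cw0 := has_derivative_continuity _ _ Hw).
  destruct (integral_linear (fun x => u' x * w x) (fun x => u x * w' x) a b 1) as [_ Hlin];
    try (apply integrable_continuity; auto; apply continuity_mult; auto).
  rewrite (integral_derivative (fun x => u x * w x)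
             (fun x => u' x * w x + 1 * (u x * w' x)) a b Hab) in Hlin; [lra| |].
  - intros x _. replace (u' x * w x + 1 * (u x * w' x)) with (u' x * w x + u x * w' x) by ring.
    apply derivable_pt_lim_mult; auto.
  - intros x _. apply continuity_plus; [apply continuity_mult; auto|].
    apply continuity_scal, continuity_mult; auto.
Qed.

Lemma integral_shift g t u w : u <= w -> continuity g ->
  integral (fun x => g (x - t)) u w = integral g (u - t) (w - t).
Proof.
  intros Huw Cg. assert (H' : u - t <= w - t) by lra.
  destruct (RiemannInt_P29 H' (fun x _ => Cg x)) as [HA _].
  set (G := primitive H' (FTC_P1 H' (fun x _ => Cg x))) in *.
  assert (HD : forall x, u - t <= x <= w - t -> derivable_pt_lim G x (g x)).
  { intros x Hx. destruct (HA x Hx) as [[l Hl] E]. simpl in E. rewrite E; auto. }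
  rewrite (integral_derivative G g (u - t) (w - t)), (integral_derivative (fun x => G (x - t))
    (fun x => g (x - t)) u w); auto.
  - intros x Hx. apply derivable_pt_lim_shift, HD. lra.
  - intros x _. apply continuity_shift; auto.
Qed.

Lemma is_poly_le_derivative n f f' : is_poly_le (S n) f -> has_derivative f f' -> is_poly_le n f'.
Proof.
  intros [c Hc] Hf. exists (fun i => INR (S i) * c (S i)). intros x.
  apply (uniqueness_limite f x); [apply Hf|].
  apply (derivable_pt_lim_ext (fun y => sum_f_R0 (fun i => c i * y ^ i) (S n)));
    [intros; symmetry; apply Hc|].
  apply (derivable_pt_lim_fs c x (S n)); lia.
Qed.

Lemma is_poly_le_has_derivative n f : is_poly_le (S n) f ->
  exists f', is_poly_le n f' /\ has_derivative f f'.
Proof.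
  intros [c Hc]. exists (fun x => sum_f_R0 (fun i => INR (S i) * c (S i) * x ^ i) n). split.
  - exists (fun i => INR (S i) * c (S i)); auto.
  - intros x. apply (derivable_pt_lim_ext (fun y => sum_f_R0 (fun i => c i * y ^ i) (S n)));
      [intros; symmetry; apply Hc|].
    apply (derivable_pt_lim_fs c x (S n)); lia.
Qed.

Lemma is_poly_le_continuity n f : is_poly_le n f -> continuity f.
Proof.
  intros [c Hc]. replace f with (fun y => sum_f_R0 (fun i => c i * y ^ i) n)
    by (apply functional_extensionality; intros; symmetry; apply Hc).
  apply continuity_finite_sum.
Qed.

Lemma deriv_tower_is_poly_le K D n l : deriv_tower K D -> is_poly_le (l + n) (D 0%nat) ->
  (l <= S K)%nat -> is_poly_le n (D l).
Proof.
  intros HD. revert n. induction l as [|l IHl]; intros n Hpoly Hl; auto.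
  apply (is_poly_le_derivative n (D l)).
  - apply IHl; [replace (l + S n)%nat with (S l + n)%nat by lia; auto | lia].
  - intro x; apply HD; lia.
Qed.

Definition taylor_monomial (a : R) (i : nat) (x : R) : R := (x - a) ^ i / INR (fact i).

Lemma taylor_monomial_derivative a i :
  has_derivative (taylor_monomial a (S i)) (taylor_monomial a i).
Proof.
  intros x. unfold taylor_monomial.
  apply (derivable_pt_lim_ext (fun x => / INR (fact (S i)) * (fun z => z ^ (S i)) (x - a)));
    [intros; unfold Rdiv; ring|].
  replace ((x - a) ^ i / INR (fact i))
    with (/ INR (fact (S i)) * (INR (S i) * (x - a) ^ pred (S i))).
  - apply derivable_pt_lim_scal, (derivable_pt_lim_shift (fun z => z ^ S i)), derivable_pt_lim_pow.
  - rewrite fact_simpl, mult_INR. simpl pred. field.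
    split; [apply INR_fact_neq_0 | apply not_0_INR; lia].
Qed.

Lemma taylor_monomial_continuity a i : continuity (taylor_monomial a i).
Proof.
  destruct i; [unfold taylor_monomial; simpl; apply continuity_const; intros ? ?; auto|].
  eapply has_derivative_continuity; apply taylor_monomial_derivative.
Qed.

Lemma taylor_monomial_bound a b i x : a <= x <= b -> Rabs (taylor_monomial a i x) <= (b - a) ^ i.
Proof.
  intros Hx. unfold taylor_monomial.
  assert (H1 : 1 <= INR (fact i)).
  { replace 1 with (INR 1) by reflexivity. apply le_INR. pose proof (lt_O_fact i); lia. }
  assert (H2 : (x - a) ^ i <= (b - a) ^ i) by (apply pow_incr; lra).
  assert (H3 : 0 <= (x - a) ^ i) by (apply pow_le; lra).
  rewrite Rabs_right.
  - apply Rle_trans with ((x - a) ^ i); auto.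
    unfold Rdiv. rewrite <- (Rmult_1_r ((x - a) ^ i)) at 2. apply Rmult_le_compat_l; auto.
    rewrite <- Rinv_1. apply Rinv_le_contravar; lra.
  - apply Rle_ge, Rmult_le_pos; [lra | left; apply Rinv_0_lt_compat; lra].
Qed.

(** * The Hermite interpolation error on one cell *)

Definition split_pairing (E1 E2 : nat -> R -> R) (a y b : R) (i : nat) (w : R -> R) : R :=
  integral (fun x => E1 i x * w x) a y + integral (fun x => E2 i x * w x) y b.

Definition vanishing_glued_jet (E1 E2 : nat -> R -> R) (a y b : R) (i : nat) : Prop :=
  has_derivative (E1 i) (E1 (S i)) /\ has_derivative (E2 i) (E2 (S i)) /\
  continuity (E1 (S i)) /\ continuity (E2 (S i)) /\
  E1 i a = 0 /\ E2 i b = 0 /\ E1 i y = E2 i y.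

Lemma split_pairing_by_parts E1 E2 a y b i w w' : a <= y -> y <= b ->
  vanishing_glued_jet E1 E2 a y b i -> has_derivative w w' -> continuity w' ->
  split_pairing E1 E2 a y b (S i) w = - split_pairing E1 E2 a y b i w'.
Proof.
  intros Hay Hyb (D1 & D2 & C1 & C2 & Za & Zb & Zy) Dw Cw. unfold split_pairing.
  rewrite (integration_by_parts (E1 i) (E1 (S i)) w w' a y),
    (integration_by_parts (E2 i) (E2 (S i)) w w' y b); auto.
  rewrite Za, Zb, Zy. ring.
Qed.

Lemma split_pairing_poly E1 E2 a y b k : a <= y -> y <= b ->
  (forall i, (i <= k)%nat -> vanishing_glued_jet E1 E2 a y b i) ->
  forall t q, (t <= k)%nat -> is_poly_le t q -> split_pairing E1 E2 a y b (S t) q = 0.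
Proof.
  intros Hay Hyb HE t. induction t as [|t IHt]; intros q Ht Hq.
  - destruct Hq as [c Hc].
    rewrite (split_pairing_by_parts E1 E2 a y b 0 q (fun _ => 0)); auto.
    + unfold split_pairing.
      replace (fun x => E1 0%nat x * 0) with (fun _ : R => 0)
        by (apply functional_extensionality; intros; ring).
      replace (fun x => E2 0%nat x * 0) with (fun _ : R => 0)
        by (apply functional_extensionality; intros; ring).
      rewrite !integral_zero; ring.
    + intro x. apply (derivable_pt_lim_ext (fun _ => c 0%nat));
        [intros; rewrite Hc; simpl; ring | apply derivable_pt_lim_const].
    + apply continuity_const; intros ? ?; auto.
  - destruct (is_poly_le_has_derivative _ _ Hq) as [q' [Hq' Dq]].
    rewrite (split_pairing_by_parts E1 E2 a y b (S t) q q'), IHt; auto; try lia.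
    + ring.
    + eapply is_poly_le_continuity; eauto.
Qed.

Section HermiteCell.

Variables (k : nat) (a y b : R) (R1 R2 P : nat -> R -> R).
Hypotheses (Hay : a <= y) (Hyb : y <= b).
Hypotheses (R1_tower : deriv_tower k R1) (R1_top : continuity (R1 (S k)))
           (R2_tower : deriv_tower k R2) (R2_top : continuity (R2 (S k))).
Hypotheses (P_tower : deriv_tower (S k) P) (P_poly : is_poly_le (2 * k + 1) (P 0%nat)).
Hypotheses (R_glued : forall l, (l <= k)%nat -> R1 l y = R2 l y)
           (P_left : forall l, (l <= k)%nat -> P l a = R1 l a)
           (P_right : forall l, (l <= k)%nat -> P l b = R2 l b).

Let E1 l x := R1 l x - P l x.
Let E2 l x := R2 l x - P l x.
Let energy_R := integral (fun x => R1 (S k) x ^ 2) a y + integral (fun x => R2 (S k) x ^ 2) y b.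
Let energy_E := integral (fun x => E1 (S k) x ^ 2) a y + integral (fun x => E2 (S k) x ^ 2) y b.

Let P_continuity := deriv_tower_continuity (S k) P P_tower.
Let R1_continuity := deriv_tower_continuity_top k R1 R1_tower R1_top.
Let R2_continuity := deriv_tower_continuity_top k R2 R2_tower R2_top.

Let E1_continuity l : (l <= S k)%nat -> continuity (E1 l).
Proof. intros Hl; apply continuity_minus; auto. Qed.

Let E2_continuity l : (l <= S k)%nat -> continuity (E2 l).
Proof. intros Hl; apply continuity_minus; auto. Qed.

Let error_vanishing i : (i <= k)%nat -> vanishing_glued_jet E1 E2 a y b i.
Proof.
  intros Hi. repeat split.
  - intro x; apply derivable_pt_lim_minus; [apply R1_tower | apply P_tower]; lia.
  - intro x; apply derivable_pt_lim_minus; [apply R2_tower | apply P_tower]; lia.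
  - apply E1_continuity; lia.
  - apply E2_continuity; lia.
  - unfold E1. rewrite P_left; auto; ring.
  - unfold E2. rewrite P_right; auto; ring.
  - unfold E1, E2. rewrite R_glued; auto.
Qed.

(* Pythagoras: the cross term pairs the error with [P (S k)], a polynomial of degree [<= k]. *)
Let energy_split : energy_R = integral (fun x => P (S k) x ^ 2) a b + energy_E.
Proof.
  assert (Orth : split_pairing E1 E2 a y b (S k) (P (S k)) = 0).
  { apply (split_pairing_poly E1 E2 a y b k Hay Hyb error_vanishing k); auto.
    apply (deriv_tower_is_poly_le (S k) P k (S k)); auto.
    replace (S k + k)%nat with (2 * k + 1)%nat by lia; auto. }
  assert (CP2 : continuity (fun x => P (S k) x ^ 2)) by (apply continuity_sqr; auto).
  rewrite (proj2 (integral_chasles _ a y b (integrable_continuity _ _ _ Hay CP2)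
                    (integrable_continuity _ _ _ Hyb CP2))).
  unfold energy_R, energy_E, split_pairing, E1, E2 in *.
  rewrite (integral_sqr_decomposition (R1 (S k)) (P (S k)) a y),
    (integral_sqr_decomposition (R2 (S k)) (P (S k)) y b); auto.
  lra.
Qed.

(* [k + 1] integrations by parts, moving the derivatives onto the Taylor monomials. *)
Let mean_error_pairing :
  integral (P 0%nat) a b - (integral (R1 0%nat) a y + integral (R2 0%nat) y b)
  = - ((-1) ^ (S k) * split_pairing E1 E2 a y b (S k) (taylor_monomial a (S k))).
Proof.
  assert (Chain : forall i, (i <= S k)%nat ->
    split_pairing E1 E2 a y b 0 (taylor_monomial a 0)
    = (-1) ^ i * split_pairing E1 E2 a y b i (taylor_monomial a i)).
  { induction i as [|i IHi]; intros Hi; [simpl; ring|].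
    rewrite IHi by lia.
    rewrite (split_pairing_by_parts E1 E2 a y b i (taylor_monomial a (S i)) (taylor_monomial a i)).
    - simpl; ring.
    - exact Hay.
    - exact Hyb.
    - apply error_vanishing; lia.
    - apply taylor_monomial_derivative.
    - apply taylor_monomial_continuity. }
  rewrite <- (Chain (S k) (le_n _)).
  unfold split_pairing, E1, E2, taylor_monomial. simpl.
  replace (fun x => (R1 0%nat x - P 0%nat x) * (1 / 1)) with (fun x => R1 0%nat x + -1 * P 0%nat x)
    by (apply functional_extensionality; intros; field).
  replace (fun x => (R2 0%nat x - P 0%nat x) * (1 / 1)) with (fun x => R2 0%nat x + -1 * P 0%nat x)
    by (apply functional_extensionality; intros; field).
  assert (I : forall u v, u <= v -> forall l, (l <= S k)%nat ->
    integrable (R1 l) u v /\ integrable (R2 l) u v /\ integrable (P l) u v).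
  { intros u v Huv l Hl. split; [|split]; apply integrable_continuity; auto. }
  destruct (I a y Hay 0%nat) as (IR1 & _ & IPl); [lia|].
  destruct (I y b Hyb 0%nat) as (_ & IR2 & IPr); [lia|].
  rewrite (proj2 (integral_linear _ _ a y (-1) IR1 IPl)),
    (proj2 (integral_linear _ _ y b (-1) IR2 IPr)),
    (proj2 (integral_chasles (P 0%nat) a y b IPl IPr)).
  ring.
Qed.

Lemma hermite_cell_estimates :
  integral (fun x => P (S k) x ^ 2) a b <=
    integral (fun x => R1 (S k) x ^ 2) a y + integral (fun x => R2 (S k) x ^ 2) y b /\
  Rabs (integral (P 0%nat) a b - (integral (R1 0%nat) a y + integral (R2 0%nat) y b)) <=
    (b - a) ^ (S k) * ((b - a) +
      (integral (fun x => R1 (S k) x ^ 2) a y + integral (fun x => R2 (S k) x ^ 2) y b)) / 2.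
Proof.
  fold energy_R. rewrite energy_split.
  assert (HE : 0 <= energy_E).
  { apply Rplus_le_le_0_compat; apply integral_nonneg; auto;
      try (apply continuity_sqr; auto); intros; apply pow2_ge_0. }
  assert (HP : 0 <= integral (fun x => P (S k) x ^ 2) a b).
  { apply integral_nonneg; [lra | apply continuity_sqr; auto | intros; apply pow2_ge_0]. }
  split; [lra|].
  rewrite mean_error_pairing, Rabs_Ropp, Rabs_mult, pow_1_abs, Rmult_1_l.
  set (hD := (b - a) ^ S k).
  assert (hD_nonneg : 0 <= hD) by (apply pow_le; lra).
  assert (Bound : forall u v, a <= u -> v <= b -> forall x, u <= x <= v ->
    Rabs (taylor_monomial a (S k) x) <= hD).
  { intros u v Hu Hv x Hx. apply taylor_monomial_bound; lra. }
  assert (I1 := abs_integral_mul_le (E1 (S k)) _ hD a y Hay (E1_continuity _ (le_n _))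
                  (taylor_monomial_continuity a (S k)) (Bound a y (Rle_refl _) Hyb)).
  assert (I2 := abs_integral_mul_le (E2 (S k)) _ hD y b Hyb (E2_continuity _ (le_n _))
                  (taylor_monomial_continuity a (S k)) (Bound y b Hay (Rle_refl _))).
  unfold split_pairing. eapply Rle_trans; [apply Rabs_triang|].
  assert (0 <= hD * integral (fun x => P (S k) x ^ 2) a b) by (apply Rmult_le_pos; auto).
  unfold energy_E in *. lra.
Qed.

End HermiteCell.

(* [sumN f n = f 0 + ... + f (n - 1)]: unlike [sum_f_R0 f n], exactly [n] terms. *)
Fixpoint sumN (f : nat -> R) (n : nat) : R :=
  match n with O => 0 | S n => sumN f n + f n end.

Lemma sumN_le f g n : (forall j, (j < n)%nat -> f j <= g j) -> sumN f n <= sumN g n.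
Proof.
  induction n as [|n IHn]; simpl; intros H; [lra|].
  assert (f n <= g n) by (apply H; lia).
  assert (sumN f n <= sumN g n) by (apply IHn; intros; apply H; lia). lra.
Qed.

Lemma sumN_plus f g n : sumN (fun j => f j + g j) n = sumN f n + sumN g n.
Proof. induction n as [|n IHn]; simpl; [ring | rewrite IHn; ring]. Qed.

Lemma sumN_scal c f n : sumN (fun j => c * f j) n = c * sumN f n.
Proof. induction n as [|n IHn]; simpl; [ring | rewrite IHn; ring]. Qed.

Lemma sumN_const c n : sumN (fun _ => c) n = INR n * c.
Proof. induction n as [|n IHn]; simpl sumN; [simpl; ring | rewrite IHn, S_INR; ring]. Qed.

Lemma sumN_telescope f n : sumN (fun j => f (S j) - f j) n = f n - f O.
Proof. induction n as [|n IHn]; simpl; [ring | rewrite IHn; ring]. Qed.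

Lemma sumN_ext f g n : (forall j, (j < n)%nat -> f j = g j) -> sumN f n = sumN g n.
Proof.
  induction n as [|n IHn]; simpl; intros H; auto.
  rewrite IHn, H; auto; intros; apply H; lia.
Qed.

Lemma sumN_abs f n : Rabs (sumN f n) <= sumN (fun j => Rabs (f j)) n.
Proof.
  induction n as [|n IHn]; simpl; [rewrite Rabs_R0; lra|].
  eapply Rle_trans; [apply Rabs_triang | lra].
Qed.

Lemma sumN_minus f g n : sumN (fun j => f j - g j) n = sumN f n - sumN g n.
Proof. induction n as [|n IHn]; simpl; [ring | rewrite IHn; ring]. Qed.

Lemma sumN_nonneg_mono w m n : (forall j, (j < n)%nat -> 0 <= w j) -> (m <= n)%nat ->
  sumN w m <= sumN w n.
Proof.
  intros Hw H. induction H as [|n Hmn IH]; simpl; [lra|].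
  assert (0 <= w n) by (apply Hw; lia).
  assert (sumN w m <= sumN w n) by (apply IH; intros; apply Hw; lia). lra.
Qed.

Section Grid.

Variables (a b : R) (N : nat).

Lemma mesh_pos : a < b -> (1 <= N)%nat -> 0 < mesh a b N.
Proof. intros Hab HN. unfold mesh. apply Rdiv_lt_0_compat; [lra | apply lt_0_INR; lia]. Qed.

Lemma grid_S j : grid a b N (S j) = grid a b N j + mesh a b N.
Proof. unfold grid; rewrite S_INR; ring. Qed.

Lemma grid_0 : grid a b N 0 = a.
Proof. unfold grid; simpl; ring. Qed.

Lemma grid_N : (1 <= N)%nat -> grid a b N N = b.
Proof. intros HN. unfold grid, mesh. field. apply not_0_INR; lia. Qed.

Lemma length_eq_mesh : (1 <= N)%nat -> b - a = INR N * mesh a b N.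
Proof. intros HN. unfold mesh; field. apply not_0_INR; lia. Qed.

Lemma grid_le i j : a < b -> (1 <= N)%nat -> (i <= j)%nat -> grid a b N i <= grid a b N j.
Proof.
  intros Hab HN Hij. unfold grid. assert (Hh := mesh_pos Hab HN). apply le_INR in Hij. nra.
Qed.

Lemma grid_cell_bounds c : a < b -> (1 <= N)%nat -> (c < N)%nat ->
  a <= grid a b N c /\ grid a b N (S c) <= b.
Proof.
  intros Hab HN Hc. split.
  - rewrite <- grid_0 at 1. apply grid_le; auto; lia.
  - pose proof (grid_le (S c) N Hab HN ltac:(lia)) as H. rewrite grid_N in H; auto.
Qed.

Lemma grid_locate_periodic t : a < b -> (1 <= N)%nat -> exists c p, (c < N)%nat /\
  grid a b N c + IZR p * (b - a) <= t < grid a b N (S c) + IZR p * (b - a).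
Proof.
  intros Hab HN. set (h := mesh a b N). assert (Hh : 0 < h) by (apply mesh_pos; auto).
  set (u := (t - a) / h). destruct (archimed u) as [A1 A2].
  set (z := (up u - 1)%Z).
  assert (Hz : IZR z * h <= t - a < (IZR z + 1) * h).
  { assert (Hu : u * h = t - a) by (unfold u; field; lra).
    unfold z; rewrite minus_IZR; simpl. split; nra. }
  destruct (Z.mod_pos_bound z (Z.of_nat N)) as [M1 M2]; [lia|].
  exists (Z.to_nat (z mod Z.of_nat N)), (z / Z.of_nat N)%Z. split; [lia|].
  assert (E : IZR z = IZR (z mod Z.of_nat N) + IZR (z / Z.of_nat N) * INR N).
  { rewrite INR_IZR_INZ, <- mult_IZR, <- plus_IZR. f_equal.
    rewrite (Z.div_mod z (Z.of_nat N)) at 1; lia. }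
  rewrite grid_S. unfold grid. rewrite INR_IZR_INZ, Z2Nat.id by lia. fold h.
  rewrite length_eq_mesh by auto. fold h. rewrite E in Hz. nra.
Qed.

Lemma grid_locate x : a < b -> (1 <= N)%nat -> a <= x <= b ->
  exists c, (c < N)%nat /\ grid a b N c <= x <= grid a b N (S c).
Proof.
  intros Hab HN Hx. destruct (grid_locate_periodic x Hab HN) as [c [p [Hc [H1 H2]]]].
  destruct (grid_cell_bounds c Hab HN Hc) as [G1 G2].
  destruct (Z.lt_trichotomy p 0) as [Hp|[->|Hp]].
  - apply IZR_lt in Hp. exfalso.
    assert (IZR p <= -1) by (apply IZR_le; apply lt_IZR in Hp; lia). nra.
  - exists c; split; auto. simpl in *. lra.
  - assert (Hp' : 1 <= IZR p) by (apply IZR_le; lia).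
    assert (x = b) by nra. subst x.
    exists (N - 1)%nat. split; [lia|].
    replace (S (N - 1)) with N by lia. rewrite grid_N by auto.
    pose proof (grid_le (N - 1) N Hab HN ltac:(lia)) as G3. rewrite grid_N in G3; auto. lra.
Qed.

Lemma grid_next_cell c p : (1 <= N)%nat -> (c < N)%nat -> exists c' p', (c' < N)%nat /\
  grid a b N c' + IZR p' * (b - a) = grid a b N (S c) + IZR p * (b - a).
Proof.
  intros HN Hc. destruct (Nat.eq_dec (S c) N) as [E|E].
  - exists 0%nat, (p + 1)%Z. split; [lia|]. rewrite grid_0, plus_IZR, E, grid_N; auto; ring.
  - exists (S c), p. split; [lia | auto].
Qed.

Lemma sumN_grid_telescope_periodic (G : R -> R) I s : (1 <= N)%nat ->
  (forall x, G (x + (b - a)) = G x + I) ->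
  sumN (fun j => G (grid a b N (S j) - s) - G (grid a b N j - s)) N = I.
Proof.
  intros HN HG. rewrite (sumN_telescope (fun j => G (grid a b N j - s))), grid_N, grid_0 by auto.
  replace (b - s) with (a - s + (b - a)) by ring. rewrite HG; ring.
Qed.

Lemma integrable_cell g gc j : a < b -> (1 <= N)%nat -> continuity gc ->
  (forall x, grid a b N j < x < grid a b N (S j) -> g x = gc x) ->
  integrable g (grid a b N j) (grid a b N (S j)).
Proof.
  intros Hab HN Cg Eg. assert (Hh := mesh_pos Hab HN).
  apply (integrable_ext_open g gc); auto; [rewrite grid_S; lra|].
  apply integrable_continuity; auto. rewrite grid_S; lra.
Qed.

Lemma integral_grid_sum g : (1 <= N)%nat ->
  (forall j, (j < N)%nat -> integrable g (grid a b N j) (grid a b N (S j))) ->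
  integrable g a b /\
  integral g a b = sumN (fun j => integral g (grid a b N j) (grid a b N (S j))) N.
Proof.
  intros HN H. rewrite <- (grid_N HN) at 1 2.
  enough (Prefix : forall n, (n <= N)%nat -> integrable g a (grid a b N n) /\
    integral g a (grid a b N n) = sumN (fun j => integral g (grid a b N j) (grid a b N (S j))) n)
    by (apply Prefix; lia).
  induction n as [|n IHn]; intros Hn.
  - rewrite grid_0. split; [constructor; exact (RiemannInt_P7 g a)|].
    simpl. rewrite (integral_eq_RiemannInt _ _ _ (RiemannInt_P7 g a)). apply RiemannInt_P9.
  - destruct IHn as [I1 E1]; [lia|].
    destruct (integral_chasles g a (grid a b N n) (grid a b N (S n)) I1 (H n ltac:(lia)))
      as [I2 E2].
    split; auto. rewrite E2, E1. reflexivity.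
Qed.

End Grid.

Lemma periodic_Z (f : R -> R) L : (forall x, f (x + L) = f x) ->
  forall p x, f (x + IZR p * L) = f x.
Proof.
  intros H.
  assert (Hn : forall n x, f (x + INR n * L) = f x).
  { induction n as [|n IHn]; intros x; [simpl; rewrite Rmult_0_l, Rplus_0_r; auto|].
    rewrite S_INR. replace (x + (INR n + 1) * L) with (x + INR n * L + L) by ring.
    rewrite H; auto. }
  intros p x. destruct p.
  - simpl; rewrite Rmult_0_l, Rplus_0_r; auto.
  - rewrite <- positive_nat_Z, <- INR_IZR_INZ. apply Hn.
  - rewrite <- Pos2Z.opp_pos, opp_IZR, <- positive_nat_Z, <- INR_IZR_INZ.
    rewrite <- (Hn (Pos.to_nat p) (x + - INR (Pos.to_nat p) * L)). f_equal; ring.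
Qed.

(* [G] is a primitive of the [(b - a)]-periodic extension of [g]. *)
Definition is_periodic_primitive (g : R -> R) (a b : R) (G : R -> R) : Prop :=
  forall p u w, a <= u -> u <= w -> w <= b ->
    G (w + IZR p * (b - a)) - G (u + IZR p * (b - a)) = integral g u w.

(* Reduce [x] to [[a, b)] by an integer number of periods, counting one [integral g a b] per
   period. *)
Lemma periodic_primitive g a b : a < b -> integrable g a b ->
  exists G : R -> R, (forall x, G (x + (b - a)) = G x + integral g a b) /\
    is_periodic_primitive g a b G.
Proof.
  intros Hab Ig. set (L := b - a). set (I := integral g a b).
  assert (HL : 0 < L) by (unfold L; lra).
  set (G0 := fun x => integral g a x).
  assert (G0_diff : forall u w, a <= u -> u <= w -> w <= b -> G0 w - G0 u = integral g u w).
  { intros u w Hu Huw Hw. unfold G0.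
    rewrite (proj2 (integral_chasles g a u w
                      (integrable_subinterval g a b a u Ig ltac:(lra) Hu ltac:(lra))
                      (integrable_subinterval g a b u w Ig Hu Huw Hw))).
    ring. }
  assert (G0_a : G0 a = 0).
  { unfold G0. rewrite (integral_eq_RiemannInt _ _ _ (RiemannInt_P7 g a)). apply RiemannInt_P9. }
  set (fl := fun x => (up ((x - a) / L) - 1)%Z).
  assert (Hfl : forall x, a <= x - IZR (fl x) * L < b).
  { intros x. destruct (archimed ((x - a) / L)) as [A1 A2]. unfold fl. rewrite minus_IZR. simpl.
    assert ((x - a) / L * L = x - a) by (field; lra).
    split; unfold L in *; nra. }
  set (G := fun x => G0 (x - IZR (fl x) * L) + IZR (fl x) * I).
  assert (G_period : forall x p, a <= x - IZR p * L <= b -> G x = G0 (x - IZR p * L) + IZR p * I).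
  { intros x p Hp. unfold G. destruct (Hfl x) as [F1 F2].
    assert (Hd : (-1 <= p - fl x < 1)%Z).
    { assert (Hdiff : IZR (p - fl x) * L = (x - IZR (fl x) * L) - (x - IZR p * L))
        by (rewrite minus_IZR; ring).
      split; [apply le_IZR | apply lt_IZR]; simpl; unfold L in *; nra. }
    destruct (Z.eq_dec p (fl x)) as [->|Hne]; [reflexivity|].
    replace p with (fl x - 1)%Z in * by lia. rewrite minus_IZR in *.
    replace (x - (IZR (fl x) - 1) * L) with (x - IZR (fl x) * L + L) in * by ring.
    assert (x - IZR (fl x) * L = a) by (unfold L in *; lra).
    rewrite H. replace (a + L) with b by (unfold L; ring). rewrite G0_a.
    replace (G0 b) with I by (unfold G0, I; reflexivity). ring. }
  exists G. split.
  - intros x. rewrite (G_period (x + L) (fl x + 1)%Z); [unfold G; rewrite plus_IZR|];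
      replace (x + L - (IZR (fl x) + 1) * L) with (x - IZR (fl x) * L) by ring.
    + ring.
    + rewrite plus_IZR. replace (x + L - (IZR (fl x) + 1) * L) with (x - IZR (fl x) * L) by ring.
      destruct (Hfl x); lra.
  - intros p u w Hu Huw Hw. fold L.
    rewrite (G_period (w + IZR p * L) p), (G_period (u + IZR p * L) p);
      replace (w + IZR p * L - IZR p * L) with w by ring;
      replace (u + IZR p * L - IZR p * L) with u by ring; try lra.
    rewrite <- G0_diff; auto. ring.
Qed.

Lemma periodic_primitive_cell a b N g gc (G : R -> R) c p s u w :
  a < b -> (1 <= N)%nat -> (c < N)%nat -> integrable g a b -> continuity gc ->
  (forall x, grid a b N c < x < grid a b N (S c) -> g x = gc x) ->
  is_periodic_primitive g a b G ->
  u <= w -> grid a b N c <= u - (s + IZR p * (b - a)) ->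
  w - (s + IZR p * (b - a)) <= grid a b N (S c) ->
  G (w - s) - G (u - s) = integral (fun t => gc (t - (s + IZR p * (b - a)))) u w.
Proof.
  intros Hab HN Hc Ig Cg Eg HG Huw Hu Hw.
  destruct (grid_cell_bounds a b N c Hab HN Hc) as [G1 G2].
  replace (w - s) with (w - (s + IZR p * (b - a)) + IZR p * (b - a)) by ring.
  replace (u - s) with (u - (s + IZR p * (b - a)) + IZR p * (b - a)) by ring.
  rewrite HG, integral_shift by (auto; lra).
  apply integral_ext_open; [lra | apply (integrable_subinterval g a b); auto; lra | |].
  - apply integrable_continuity; auto; lra.
  - intros; apply Eg; lra.
Qed.

(** * One step of the scheme *)

(* [F l] is the [l]-th derivative of a periodic function that is [C^(k+1)] on every closed
   cell; [F (S k)] is its cellwise derivative, unconstrained at the grid points. *)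
Definition cellwise_smooth (k : nat) (a b : R) (N : nat) (F : nat -> R -> R) : Prop :=
  (forall l x, (l <= S k)%nat -> F l (x + (b - a)) = F l x) /\
  forall j, (j < N)%nat -> exists Q : nat -> R -> R,
    deriv_tower k Q /\ continuity (Q (S k)) /\
    (forall l x, (l <= k)%nat -> grid a b N j <= x <= grid a b N (S j) -> F l x = Q l x) /\
    (forall x, grid a b N j < x < grid a b N (S j) -> F (S k) x = Q (S k) x).

Lemma cellwise_smooth_integrable_cell k a b N F j :
  a < b -> (1 <= N)%nat -> cellwise_smooth k a b N F -> (j < N)%nat ->
  (forall l, (l <= k)%nat -> integrable (F l) (grid a b N j) (grid a b N (S j))) /\
  integrable (fun x => F (S k) x ^ 2) (grid a b N j) (grid a b N (S j)).
Proof.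
  intros Hab HN [_ Fcells] Hj. destruct (Fcells j Hj) as [Q (Q_tower & Q_top & Q_eq & Q_eq_top)].
  split.
  - intros l Hl. apply (integrable_cell a b N _ (Q l) j Hab HN).
    + apply (deriv_tower_continuity k); auto.
    + intros x Hx; apply Q_eq; auto; lra.
  - apply (integrable_cell a b N _ (fun x => Q (S k) x ^ 2) j Hab HN).
    + apply continuity_sqr; auto.
    + intros x Hx; rewrite Q_eq_top; auto.
Qed.

Lemma cellwise_smooth_integrable k a b N F : a < b -> (1 <= N)%nat -> cellwise_smooth k a b N F ->
  (forall l, (l <= k)%nat -> integrable (F l) a b) /\ integrable (fun x => F (S k) x ^ 2) a b.
Proof.
  intros Hab HN HF. split; [intros l Hl|]; apply (integral_grid_sum a b N _ HN); intros j Hj;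
    apply (cellwise_smooth_integrable_cell k a b N F j Hab HN HF Hj); auto.
Qed.

Lemma jet_step_cellwise_smooth k a b v dt N F G :
  jet_step k a b v dt N F G -> cellwise_smooth k a b N G.
Proof.
  intros [Gper Gcells]. split; auto. intros j Hj.
  destruct (Gcells j Hj) as [P (_ & P_tower & P_eq & P_eq_top & _)].
  exists P. repeat split; auto.
  - intros l x Hl; apply P_tower; lia.
  - apply (deriv_tower_continuity (S k) P P_tower); lia.
Qed.

Lemma shifted_cell_piece k a b N F (Phi Psi : R -> R) c p s u w :
  a < b -> (1 <= N)%nat -> (c < N)%nat -> cellwise_smooth k a b N F ->
  is_periodic_primitive (fun x => F (S k) x ^ 2) a b Phi ->
  is_periodic_primitive (F 0%nat) a b Psi ->
  u <= w -> grid a b N c <= u - (s + IZR p * (b - a)) ->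
  w - (s + IZR p * (b - a)) <= grid a b N (S c) ->
  exists R : nat -> R -> R, deriv_tower k R /\ continuity (R (S k)) /\
    (forall l x, (l <= k)%nat -> u <= x <= w -> R l x = F l (x - s)) /\
    integral (fun x => R (S k) x ^ 2) u w = Phi (w - s) - Phi (u - s) /\
    integral (R 0%nat) u w = Psi (w - s) - Psi (u - s).
Proof.
  intros Hab HN Hc HF HPhi HPsi Huw Hu Hw.
  pose proof HF as [Fper Fcells].
  destruct (cellwise_smooth_integrable k a b N F Hab HN HF) as [IF IF2].
  destruct (Fcells c Hc) as [Q (Q_tower & Q_top & Q_eq & Q_eq_top)].
  assert (CQ := deriv_tower_continuity k Q Q_tower 0 (Nat.le_0_l k)).
  exists (fun l x => Q l (x - (s + IZR p * (b - a)))).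
  split; [apply deriv_tower_shift; auto|]. split; [apply continuity_shift; auto|].
  split; [|split].
  - intros l x Hl Hx. rewrite <- Q_eq by (auto; lra).
    rewrite <- (periodic_Z (F l) (b - a)) with (p := p) by (intros; apply Fper; lia).
    f_equal; ring.
  - symmetry.
    apply (periodic_primitive_cell a b N (fun x => F (S k) x ^ 2) (fun x => Q (S k) x ^ 2)
             Phi c p s u w); auto.
    + apply continuity_sqr; auto.
    + intros; rewrite Q_eq_top; auto.
  - symmetry. apply (periodic_primitive_cell a b N (F 0%nat) (Q 0%nat) Psi c p s u w); auto.
    + apply IF; lia.
    + intros; apply Q_eq; auto; lia || lra.
Qed.

(* The new cell [x_j, x_{j+1}], shifted back by [s], meets two consecutive old cells (up to a
   period), so the shifted old iterate is smooth on either side of one breakpoint [y]; its jets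
   agree at [y] because both sides equal those of the old iterate there.  [Phi] and [Psi] are
   periodic primitives of the old energy density and of the old iterate. *)
Lemma shifted_cell_split k a b N F (Phi Psi : R -> R) s j :
  a < b -> (1 <= N)%nat -> (j < N)%nat -> cellwise_smooth k a b N F ->
  is_periodic_primitive (fun x => F (S k) x ^ 2) a b Phi ->
  is_periodic_primitive (F 0%nat) a b Psi ->
  let xl := grid a b N j in let xr := grid a b N (S j) in
  exists y (R1 R2 : nat -> R -> R), xl <= y <= xr /\
    deriv_tower k R1 /\ continuity (R1 (S k)) /\ deriv_tower k R2 /\ continuity (R2 (S k)) /\
    (forall l, (l <= k)%nat ->
       R1 l y = R2 l y /\ R1 l xl = F l (xl - s) /\ R2 l xr = F l (xr - s)) /\
    integral (fun x => R1 (S k) x ^ 2) xl y + integral (fun x => R2 (S k) x ^ 2) y xr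
      = Phi (xr - s) - Phi (xl - s) /\
    integral (R1 0%nat) xl y + integral (R2 0%nat) y xr = Psi (xr - s) - Psi (xl - s).
Proof.
  intros Hab HN Hj HF HPhi HPsi xl xr.
  assert (gS : forall i, grid a b N (S i) = grid a b N i + mesh a b N) by (intros; apply grid_S).
  destruct (grid_locate_periodic a b N (xl - s) Hab HN) as [c [p [Hc [Hl1 Hl2]]]].
  destruct (grid_next_cell a b N c p HN Hc) as [c' [p' [Hc' Hcp]]].
  set (y := grid a b N (S c) + IZR p * (b - a) + s).
  assert (Hy : xl <= y <= xr) by (unfold y, xl, xr in *; rewrite ?gS in *; split; lra).
  destruct (shifted_cell_piece k a b N F Phi Psi c p s xl y)
    as (R1 & R1_tower & R1_top & R1_eq & R1_Phi & R1_Psi); auto; try tauto;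
    try (unfold y, xl in *; rewrite ?gS in *; lra).
  destruct (shifted_cell_piece k a b N F Phi Psi c' p' s y xr)
    as (R2 & R2_tower & R2_top & R2_eq & R2_Phi & R2_Psi); auto; try tauto;
    try (unfold y, xl, xr in *; rewrite ?gS in *; lra).
  exists y, R1, R2. repeat (split; [tauto|]).
  split; [|split].
  - intros l Hl. rewrite R1_eq, R2_eq, R1_eq, R2_eq; auto; lra.
  - rewrite R1_Phi, R2_Phi; ring.
  - rewrite R1_Psi, R2_Psi; ring.
Qed.

Lemma jet_cell_estimates k a b v dt N F G (Phi Psi : R -> R) j :
  a < b -> (1 <= N)%nat -> (j < N)%nat ->
  cellwise_smooth k a b N F -> jet_step k a b v dt N F G ->
  is_periodic_primitive (fun x => F (S k) x ^ 2) a b Phi ->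
  is_periodic_primitive (F 0%nat) a b Psi ->
  let dPhi := Phi (grid a b N (S j) - v * dt) - Phi (grid a b N j - v * dt) in
  let dPsi := Psi (grid a b N (S j) - v * dt) - Psi (grid a b N j - v * dt) in
  integral (fun x => G (S k) x ^ 2) (grid a b N j) (grid a b N (S j)) <= dPhi /\
  Rabs (integral (G 0%nat) (grid a b N j) (grid a b N (S j)) - dPsi) <=
    mesh a b N ^ (S k) * (mesh a b N + dPhi) / 2.
Proof.
  intros Hab HN Hj HF HJ HPhi HPsi dPhi dPsi.
  destruct (shifted_cell_split k a b N F Phi Psi (v * dt) j Hab HN Hj HF HPhi HPsi)
    as (y & R1 & R2 & Hy & R1_tower & R1_top & R2_tower & R2_top & Match & EPhi & EPsi).
  destruct (cellwise_smooth_integrable_cell k a b N G j Hab HN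
              (jet_step_cellwise_smooth k a b v dt N F G HJ) Hj) as [IG IG2].
  destruct HJ as [_ Gcells].
  destruct (Gcells j Hj) as [P (P_poly & P_tower & P_eq & P_eq_top & P_match)].
  set (xl := grid a b N j) in *. set (xr := grid a b N (S j)) in *.
  destruct (hermite_cell_estimates k xl y xr R1 R2 P ltac:(lra) ltac:(lra) R1_tower R1_top
              R2_tower R2_top P_tower P_poly)
    as [Energy Mean];
    try (intros l Hl; destruct (Match l Hl) as (M0 & M1 & M2), (P_match l Hl) as [P1 P2];
         congruence).
  assert (CP := deriv_tower_continuity (S k) P P_tower).
  rewrite (integral_ext_open (fun x => G (S k) x ^ 2) (fun x => P (S k) x ^ 2) xl xr),
    (integral_ext_open (G 0%nat) (P 0%nat) xl xr);
    try solve [lra | apply IG; lia | auto | intros; apply P_eq; auto; lia || lra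
              | intros; rewrite P_eq_top; auto
              | apply integrable_continuity; [lra | auto using continuity_sqr]
              | apply integrable_continuity; [lra | apply CP; lia]].
  unfold dPhi, dPsi. fold xl xr. rewrite EPhi in Energy, Mean. rewrite EPsi in Mean.
  replace (xr - xl) with (mesh a b N) in Mean by (unfold xl, xr; rewrite grid_S; ring).
  split; assumption.
Qed.

Lemma jet_step_estimates k a b v dt N F G : a < b -> (1 <= N)%nat ->
  cellwise_smooth k a b N F -> jet_step k a b v dt N F G ->
  integral (fun x => G (S k) x ^ 2) a b <= integral (fun x => F (S k) x ^ 2) a b /\
  Rabs (integral (G 0%nat) a b - integral (F 0%nat) a b) <=
    mesh a b N ^ (S k) * ((b - a) + integral (fun x => F (S k) x ^ 2) a b) / 2.
Proof.
  intros Hab HN HF HJ.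
  set (s := v * dt). set (h := mesh a b N).
  destruct (cellwise_smooth_integrable k a b N F Hab HN HF) as [IF IF2].
  destruct (periodic_primitive _ a b Hab IF2) as [Phi [Phi_per Phi_diff]].
  destruct (periodic_primitive _ a b Hab (IF 0%nat (Nat.le_0_l k))) as [Psi [Psi_per Psi_diff]].
  assert (Cell := fun j Hj => jet_cell_estimates k a b v dt N F G Phi Psi j Hab HN Hj HF HJ
                                Phi_diff Psi_diff).
  assert (IG := fun j Hj => cellwise_smooth_integrable_cell k a b N G j Hab HN
                              (jet_step_cellwise_smooth k a b v dt N F G HJ) Hj).
  set (dPhi := fun j => Phi (grid a b N (S j) - s) - Phi (grid a b N j - s)).
  set (dPsi := fun j => Psi (grid a b N (S j) - s) - Psi (grid a b N j - s)).
  assert (Sum_dPhi : sumN dPhi N = integral (fun x => F (S k) x ^ 2) a b)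
    by (apply sumN_grid_telescope_periodic; auto).
  assert (Sum_dPsi : sumN dPsi N = integral (F 0%nat) a b)
    by (apply sumN_grid_telescope_periodic; auto).
  rewrite (proj2 (integral_grid_sum a b N (fun x => G (S k) x ^ 2) HN
                    (fun j Hj => proj2 (IG j Hj)))),
    (proj2 (integral_grid_sum a b N (G 0%nat) HN
              (fun j Hj => proj1 (IG j Hj) 0%nat (Nat.le_0_l k)))).
  split.
  - rewrite <- Sum_dPhi. apply sumN_le. intros j Hj; apply Cell; auto.
  - rewrite <- Sum_dPsi, <- sumN_minus. eapply Rle_trans; [apply sumN_abs|].
    apply Rle_trans with (sumN (fun j => h ^ S k * h / 2 + h ^ S k / 2 * dPhi j) N).
    + apply sumN_le. intros j Hj. destruct (Cell j Hj) as [_ Cm].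
      unfold dPhi, dPsi, h, s. eapply Rle_trans; [exact Cm | right; field].
    + rewrite sumN_plus, sumN_scal, sumN_const, Sum_dPhi, (length_eq_mesh a b N HN).
      right; unfold h; field.
Qed.

Lemma deriv_tower_periodic K D L : deriv_tower K D ->
  (forall x, D 0%nat (x + L) = D 0%nat x) -> forall l x, (l <= S K)%nat -> D l (x + L) = D l x.
Proof.
  intros HD Hper l. induction l as [|l IHl]; intros x Hl; auto.
  apply (uniqueness_limite (D l) x); [|apply HD; lia].
  apply (derivable_pt_lim_ext (fun y => D l (y - - L))).
  - intros y. replace (y - - L) with (y + L) by ring. apply IHl; lia.
  - apply derivable_pt_lim_shift. replace (x - - L) with (x + L) by ring. apply HD; lia.
Qed.

Lemma cellwise_smooth_of_tower k a b N F D : deriv_tower k D -> continuity (D (S k)) ->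
  (forall l x, (l <= S k)%nat -> D l (x + (b - a)) = D l x) ->
  (forall l x, (l <= S k)%nat -> F l x = D l x) -> cellwise_smooth k a b N F.
Proof.
  intros HD Ctop Dper HFD. split.
  - intros l x Hl. rewrite !HFD; auto.
  - intros j Hj. exists D. repeat split; auto; intros; apply HFD; lia.
Qed.

Lemma jet_scheme_estimates k a b v dt N (Phi : nat -> nat -> R -> R) :
  a < b -> (1 <= N)%nat -> cellwise_smooth k a b N (Phi 0%nat) ->
  (forall m, jet_step k a b v dt N (Phi m) (Phi (S m))) ->
  forall m, cellwise_smooth k a b N (Phi m) /\
    integral (fun x => Phi m (S k) x ^ 2) a b <= integral (fun x => Phi 0%nat (S k) x ^ 2) a b /\
    Rabs (integral (Phi m 0%nat) a b - integral (Phi 0%nat 0%nat) a b) <=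
      INR m * mesh a b N ^ (S k) * ((b - a) + integral (fun x => Phi 0%nat (S k) x ^ 2) a b) / 2.
Proof.
  intros Hab HN H0 Hstep m. set (E0 := integral (fun x => Phi 0%nat (S k) x ^ 2) a b).
  assert (Hh : 0 <= mesh a b N ^ S k) by (apply pow_le; left; apply mesh_pos; auto).
  induction m as [|m (Hsm & Em & Mm)].
  - split; [auto | split; [apply Rle_refl|]]. rewrite Rminus_diag, Rabs_R0. right; simpl INR; field.
  - destruct (jet_step_estimates k a b v dt N _ _ Hab HN Hsm (Hstep m)) as [Es Ms].
    split; [apply (jet_step_cellwise_smooth k a b v dt N (Phi m)); auto | split; [lra|]].
    replace (integral (Phi (S m) 0%nat) a b - integral (Phi 0%nat 0%nat) a b) with
      ((integral (Phi (S m) 0%nat) a b - integral (Phi m 0%nat) a b) +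
       (integral (Phi m 0%nat) a b - integral (Phi 0%nat 0%nat) a b)) by ring.
    eapply Rle_trans; [apply Rabs_triang|]. rewrite S_INR.
    assert (mesh a b N ^ S k * integral (fun x => Phi m (S k) x ^ 2) a b <= mesh a b N ^ S k * E0)
      by (apply Rmult_le_compat_l; auto).
    lra.
Qed.

(** * From energy and mean to pointwise bounds *)

Lemma oscillation_le_cells a b N (f : R -> R) (w : nat -> R) : a < b -> (1 <= N)%nat ->
  (forall c, (c < N)%nat -> forall x y, grid a b N c <= x <= grid a b N (S c) ->
      grid a b N c <= y <= grid a b N (S c) -> Rabs (f x - f y) <= w c) ->
  forall x y, a <= x <= b -> a <= y <= b -> Rabs (f x - f y) <= 2 * sumN w N.
Proof.
  intros Hab HN Hw.
  assert (Hh := mesh_pos a b N Hab HN). assert (gS := grid_S a b N).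
  assert (w_nonneg : forall c, (c < N)%nat -> 0 <= w c).
  { intros c Hc. eapply Rle_trans; [apply Rabs_pos|]. apply (Hw c Hc (grid a b N c) (grid a b N c));
      rewrite gS; lra. }
  assert (Nodes : forall n, (n <= N)%nat -> Rabs (f (grid a b N n) - f a) <= sumN w n).
  { induction n as [|n IHn]; intros Hn.
    - rewrite grid_0, Rminus_diag, Rabs_R0. simpl; lra.
    - replace (f (grid a b N (S n)) - f a)
        with ((f (grid a b N (S n)) - f (grid a b N n)) + (f (grid a b N n) - f a)) by ring.
      eapply Rle_trans; [apply Rabs_triang|]. simpl.
      assert (Rabs (f (grid a b N (S n)) - f (grid a b N n)) <= w n)
        by (apply Hw; try lia; rewrite gS; lra).
      assert (Rabs (f (grid a b N n) - f a) <= sumN w n) by (apply IHn; lia). lra. }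
  assert (Points : forall x, a <= x <= b -> Rabs (f x - f a) <= sumN w N).
  { intros x Hx. destruct (grid_locate a b N x Hab HN Hx) as [c [Hc Hxc]].
    replace (f x - f a) with ((f x - f (grid a b N c)) + (f (grid a b N c) - f a)) by ring.
    eapply Rle_trans; [apply Rabs_triang|].
    assert (Rabs (f x - f (grid a b N c)) <= w c) by (apply Hw; auto; rewrite gS; lra).
    assert (Rabs (f (grid a b N c) - f a) <= sumN w c) by (apply Nodes; lia).
    assert (sumN w (S c) <= sumN w N) by (apply sumN_nonneg_mono; auto).
    simpl in *. lra. }
  intros x y Hx Hy.
  replace (f x - f y) with ((f x - f a) - (f y - f a)) by ring.
  eapply Rle_trans; [apply Rabs_triang|]. rewrite Rabs_Ropp.
  assert (Px := Points x Hx). assert (Py := Points y Hy). lra.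
Qed.

Lemma abs_le_mean_add_oscillation a b (f : R -> R) W : a < b -> integrable f a b ->
  (forall x y, a <= x <= b -> a <= y <= b -> Rabs (f x - f y) <= W) ->
  forall x, a <= x <= b -> Rabs (f x) <= Rabs (integral f a b) / (b - a) + W.
Proof.
  intros Hab If HW x Hx.
  assert (Near : forall y, a < y < b -> f x - W <= f y <= f x + W).
  { intros y Hy. assert (Hxy := HW x y Hx ltac:(lra)).
    revert Hxy; unfold Rabs; destruct Rcase_abs; lra. }
  assert (L1 : integral (fun _ => f x - W) a b <= integral f a b)
    by (apply integral_le; [lra | apply integral_const | auto | intros y Hy; apply Near; auto]).
  assert (L2 : integral f a b <= integral (fun _ => f x + W) a b)
    by (apply integral_le; [lra | auto | apply integral_const | intros y Hy; apply Near; auto]).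
  rewrite (proj2 (integral_const _ a b)) in L1. rewrite (proj2 (integral_const _ a b)) in L2.
  set (I := integral f a b) in *.
  assert (Hd : f x - W <= I / (b - a) <= f x + W).
  { split; apply (Rmult_le_reg_r (b - a)); try lra; unfold Rdiv; rewrite Rmult_assoc, Rinv_l; lra. }
  assert (Rabs (I / (b - a)) = Rabs I / (b - a)).
  { unfold Rdiv. rewrite Rabs_mult, (Rabs_right (/ (b - a))); auto.
    apply Rle_ge; left; apply Rinv_0_lt_compat; lra. }
  assert (I / (b - a) <= Rabs (I / (b - a))) by apply Rle_abs.
  assert (- (I / (b - a)) <= Rabs (I / (b - a))) by (rewrite <- Rabs_Ropp; apply Rle_abs).
  apply Rabs_le; lra.
Qed.

Lemma cellwise_smooth_derivative_mean_zero k a b N F l : a < b -> (1 <= N)%nat ->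
  cellwise_smooth k a b N F -> (S l <= k)%nat -> integral (F (S l)) a b = 0.
Proof.
  intros Hab HN HF Hl.
  assert (IF := fun j Hj =>
    proj1 (cellwise_smooth_integrable_cell k a b N F j Hab HN HF Hj) (S l) Hl).
  rewrite (proj2 (integral_grid_sum a b N (F (S l)) HN IF)).
  destruct HF as [Fper Fcells].
  rewrite (sumN_ext _ (fun j => F l (grid a b N (S j)) - F l (grid a b N j))).
  - rewrite (sumN_telescope (fun j => F l (grid a b N j))), grid_N, grid_0 by auto.
    replace b with (a + (b - a)) at 1 by ring. rewrite Fper; [ring | lia].
  - intros j Hj. destruct (Fcells j Hj) as [Q (Q_tower & Q_top & Q_eq & _)].
    assert (Hs := grid_S a b N j). assert (Hh := mesh_pos a b N Hab HN).
    assert (CQ : continuity (Q (S l))) by (apply (deriv_tower_continuity k); auto).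
    rewrite (integral_ext_open (F (S l)) (Q (S l))), (integral_derivative (Q l) (Q (S l)));
      auto; try lra.
    + rewrite !Q_eq; auto; lia || lra.
    + intros x _; apply Q_tower; lia.
    + apply integrable_continuity; auto; lra.
    + intros x Hx; apply Q_eq; auto; lra.
Qed.

(* On a cell, [|F k x - F k y| <= |int F (S k)| <= (h + int F (S k) ^ 2) / 2] by AM-GM. *)
Lemma cellwise_smooth_oscillation_top k a b N F : a < b -> (1 <= N)%nat ->
  cellwise_smooth k a b N F -> forall x y, a <= x <= b -> a <= y <= b ->
  Rabs (F k x - F k y) <= (b - a) + integral (fun x => F (S k) x ^ 2) a b.
Proof.
  intros Hab HN HF.
  assert (Hh := mesh_pos a b N Hab HN).
  set (w := fun j => / 2 * mesh a b N +
                     / 2 * integral (fun x => F (S k) x ^ 2) (grid a b N j) (grid a b N (S j))).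
  assert (Cells : forall c, (c < N)%nat -> forall x y, grid a b N c <= x <= grid a b N (S c) ->
      grid a b N c <= y <= grid a b N (S c) -> Rabs (F k x - F k y) <= w c).
  { intros c Hc.
    assert (IF2 := proj2 (cellwise_smooth_integrable_cell k a b N F c Hab HN HF Hc)).
    destruct HF as [_ Fcells]. destruct (Fcells c Hc) as [Q (Q_tower & Q_top & Q_eq & Q_eq_top)].
    assert (Hs := grid_S a b N c).
    assert (Ordered : forall x y, grid a b N c <= y -> y <= x -> x <= grid a b N (S c) ->
      Rabs (F k x - F k y) <= w c).
    { intros x y Hy Hyx Hx. rewrite !Q_eq by (auto; lra).
      rewrite <- (integral_derivative (Q k) (Q (S k)) y x)
        by (first [lra | intros; apply Q_tower; auto | intros; apply Q_top]).
      replace (integral (Q (S k)) y x) with (integral (fun t => Q (S k) t * 1) y x)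
        by (f_equal; apply functional_extensionality; intros; ring).
      eapply Rle_trans.
      { apply (abs_integral_mul_le (Q (S k)) (fun _ => 1) 1 y x); auto.
        - apply continuity_const; intros ? ?; auto.
        - intros; rewrite Rabs_R1; lra. }
      assert (integral (fun t => Q (S k) t ^ 2) y x <=
              integral (fun t => Q (S k) t ^ 2) (grid a b N c) (grid a b N (S c)))
        by (apply integral_subinterval_le; auto using continuity_sqr; intros; apply pow2_ge_0).
      unfold w. rewrite (integral_ext_open (fun x => F (S k) x ^ 2) (fun t => Q (S k) t ^ 2));
        auto; try lra.
      - apply integrable_continuity; [lra | auto using continuity_sqr].
      - intros t Ht; rewrite Q_eq_top; auto. }
    intros x y Hx Hy. destruct (Rle_dec y x).
    - apply Ordered; lra.
    - rewrite Rabs_minus_sym. apply Ordered; lra. }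
  intros x y Hx Hy.
  eapply Rle_trans; [apply (oscillation_le_cells a b N (F k) w Hab HN Cells); auto|].
  unfold w. rewrite sumN_plus, sumN_scal, sumN_scal, sumN_const.
  rewrite <- (proj2 (integral_grid_sum a b N _ HN
    (fun j Hj => proj2 (cellwise_smooth_integrable_cell k a b N F j Hab HN HF Hj)))).
  rewrite (length_eq_mesh a b N HN). right; field.
Qed.

Lemma cellwise_smooth_oscillation_low k a b N F l B : a < b -> (1 <= N)%nat ->
  cellwise_smooth k a b N F -> (l < k)%nat -> (forall x, a <= x <= b -> Rabs (F (S l) x) <= B) ->
  forall x y, a <= x <= b -> a <= y <= b -> Rabs (F l x - F l y) <= 2 * ((b - a) * B).
Proof.
  intros Hab HN HF Hl HB.
  assert (Hh := mesh_pos a b N Hab HN).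
  assert (Cells : forall c, (c < N)%nat -> forall x y, grid a b N c <= x <= grid a b N (S c) ->
      grid a b N c <= y <= grid a b N (S c) -> Rabs (F l x - F l y) <= mesh a b N * B).
  { intros c Hc x y Hx Hy.
    destruct HF as [_ Fcells]. destruct (Fcells c Hc) as [Q (Q_tower & _ & Q_eq & _)].
    destruct (grid_cell_bounds a b N c Hab HN Hc) as [G1 G2]. assert (Hs := grid_S a b N c).
    rewrite !Q_eq by (auto; lia).
    destruct (MVT_abs (Q l) (Q (S l)) y x) as [z [Hz Hzr]]; [intros; apply Q_tower; lia|].
    assert (Zcell : grid a b N c <= z <= grid a b N (S c))
      by (unfold Rmin, Rmax in Hzr; destruct Rle_dec; lra).
    assert (Hxy : Rabs (x - y) <= mesh a b N) by (unfold Rabs; destruct Rcase_abs; lra).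
    rewrite Hz, <- (Q_eq (S l) z) by (auto; lia).
    assert (Rabs (F (S l) z) <= B) by (apply HB; lra).
    rewrite Rmult_comm. apply Rmult_le_compat; auto; apply Rabs_pos. }
  intros x y Hx Hy.
  eapply Rle_trans; [apply (oscillation_le_cells a b N (F l) (fun _ => mesh a b N * B)); auto|].
  rewrite sumN_const, (length_eq_mesh a b N HN). right; ring.
Qed.

(* Bound for the derivative of order [k - i]: a mean part plus an oscillation part; the [+ 1]
   in [2 L + 1] only serves to make it nondecreasing in [i]. *)
Fixpoint jet_bound (L mu E : R) (i : nat) : R :=
  match i with
  | O => mu / L + (L + E)
  | S i => mu / L + (2 * L + 1) * jet_bound L mu E i
  end.

Lemma jet_bound_nonneg_mono L mu E i j : 0 < L -> 0 <= mu -> 0 <= E -> (i <= j)%nat ->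
  0 <= jet_bound L mu E i <= jet_bound L mu E j.
Proof.
  intros HL Hmu HE Hij.
  assert (0 <= mu / L) by (apply Rmult_le_pos; [lra | left; apply Rinv_0_lt_compat; lra]).
  assert (Nonneg : forall i, 0 <= jet_bound L mu E i) by (induction i0; simpl; nra).
  split; auto. induction Hij as [|j _ IH]; [lra|]. simpl. specialize (Nonneg j). nra.
Qed.

Lemma cellwise_smooth_sup_bound k a b N F E mu : a < b -> (1 <= N)%nat ->
  cellwise_smooth k a b N F -> integral (fun x => F (S k) x ^ 2) a b <= E ->
  Rabs (integral (F 0%nat) a b) <= mu -> 0 <= mu -> 0 <= E ->
  forall l x, (l <= k)%nat -> a <= x <= b -> Rabs (F l x) <= jet_bound (b - a) mu E k.
Proof.
  intros Hab HN HF HE Hmu Hmu0 HE0.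
  assert (HL : 0 < b - a) by lra.
  assert (Means : forall l, (l <= k)%nat -> Rabs (integral (F l) a b) / (b - a) <= mu / (b - a)).
  { intros l Hl. apply Rmult_le_compat_r; [left; apply Rinv_0_lt_compat; lra|].
    destruct l as [|l]; auto.
    rewrite (cellwise_smooth_derivative_mean_zero k a b N F l), Rabs_R0; auto. }
  assert (IF := proj1 (cellwise_smooth_integrable k a b N F Hab HN HF)).
  assert (Levels : forall i, (i <= k)%nat -> forall x, a <= x <= b ->
    Rabs (F (k - i)%nat x) <= jet_bound (b - a) mu E i).
  { induction i as [|i IHi]; intros Hi x Hx.
    - replace (k - 0)%nat with k by lia.
      eapply Rle_trans; [apply (abs_le_mean_add_oscillation a b (F k) ((b - a) + E)); auto|].
      + intros x0 y0 Hx0 Hy0.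
        eapply Rle_trans; [apply (cellwise_smooth_oscillation_top k a b N F); auto | lra].
      + simpl. assert (HM := Means k (le_n k)). lra.
    - assert (Hl : S (k - S i) = (k - i)%nat) by lia.
      assert (IH := IHi ltac:(lia)). rewrite <- Hl in IH.
      assert (HB := proj1 (jet_bound_nonneg_mono (b - a) mu E i i HL Hmu0 HE0 (le_n i))).
      eapply Rle_trans; [apply (abs_le_mean_add_oscillation a b (F (k - S i)%nat)
                                  (2 * ((b - a) * jet_bound (b - a) mu E i))); auto|].
      + apply IF; lia.
      + apply (cellwise_smooth_oscillation_low k a b N F); auto; lia.
      + simpl. assert (HM := Means (k - S i)%nat ltac:(lia)). nra. }
  intros l x Hl Hx. replace l with (k - (k - l))%nat by lia.
  eapply Rle_trans; [apply Levels; auto; lia|].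
  apply jet_bound_nonneg_mono; auto; lia.
Qed.

Lemma step_count_bound (m : nat) dt c T q : 0 < c -> dt >= c * q -> INR m * dt <= T ->
  INR m * q <= T / c.
Proof.
  intros Hc Hdt Hm. apply (Rmult_le_reg_r c); auto.
  replace (T / c * c) with T by (field; lra).
  assert (0 <= INR m) by apply pos_INR. nra.
Qed.

Theorem mainTheorem9
  (k : nat) (a b v T c : R) (phiIC : R -> R) (dIC : nat -> R -> R)
  (Hab : a < b) (HT : 0 < T) (Hc : 0 < c)
  (HIC0 : forall x, dIC 0%nat x = phiIC x)
  (HICd : deriv_tower k dIC)
  (HICc : continuity (dIC (S k)))
  (HICper : forall x, phiIC (x + (b - a)) = phiIC x) :
  exists M : R,
    forall (N : nat) (dt : R) (Phi : nat -> nat -> R -> R),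
      (1 <= N)%nat ->
      dt >= c * (mesh a b N) ^ (S k) ->
      (forall l x, (l <= S k)%nat -> Phi 0%nat l x = dIC l x) ->
      (forall m, jet_step k a b v dt N (Phi m) (Phi (S m))) ->
      forall m : nat, INR m * dt <= T ->
        (forall l x, (l <= k)%nat -> a <= x <= b -> Rabs (Phi m l x) <= M) /\
        (exists pr : Riemann_integrable (fun x => (Phi m (S k) x) ^ 2) a b,
            sqrt (RiemannInt pr) <= M).
Proof.
  set (L := b - a). set (E0 := integral (fun x => dIC (S k) x ^ 2) a b).
  set (mu := Rabs (integral (dIC 0%nat) a b) + T / c * ((L + E0) / 2)).
  assert (HE0 : 0 <= E0)
    by (apply integral_nonneg; [lra | apply continuity_sqr; auto | intros; apply pow2_ge_0]).
  assert (HTc : 0 < T / c) by (apply Rdiv_lt_0_compat; auto).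
  assert (Hmu : 0 <= mu) by (assert (0 <= Rabs (integral (dIC 0%nat) a b)) by apply Rabs_pos;
                             unfold mu, L in *; nra).
  assert (ICper := deriv_tower_periodic k dIC L HICd ltac:(intros; rewrite !HIC0; apply HICper)).
  exists (jet_bound L mu E0 k + sqrt E0).
  intros N dt Phi HN Hdt H0 Hstep m Hm.
  assert (Phi0 : forall l, (l <= S k)%nat -> Phi 0%nat l = dIC l)
    by (intros; apply functional_extensionality; auto).
  destruct (jet_scheme_estimates k a b v dt N Phi Hab HN
              (cellwise_smooth_of_tower k a b N _ dIC HICd HICc ICper H0) Hstep m)
    as (Hsm & Em & Mm).
  rewrite (Phi0 (S k)) in Em, Mm by lia. rewrite (Phi0 0%nat) in Mm by lia. fold L E0 in Em, Mm.
  assert (Steps := step_count_bound m dt c T _ Hc Hdt Hm).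
  assert (Mean : Rabs (integral (Phi m 0%nat) a b) <= mu).
  { assert (Drift := Rabs_triang_inv (integral (Phi m 0%nat) a b) (integral (dIC 0%nat) a b)).
    assert (0 <= L + E0) by (unfold L; lra). unfold mu. nra. }
  assert (Sup := cellwise_smooth_sup_bound k a b N (Phi m) E0 mu Hab HN Hsm Em Mean Hmu HE0).
  fold L in Sup.
  assert (0 <= jet_bound L mu E0 k)
    by (eapply Rle_trans; [apply Rabs_pos | apply (Sup 0%nat a); [lia | split; lra]]).
  assert (0 <= sqrt E0) by apply sqrt_pos.
  split.
  - intros l x Hl Hx. eapply Rle_trans; [apply Sup; auto | lra].
  - destruct (proj2 (cellwise_smooth_integrable k a b N _ Hab HN Hsm)) as [pr]. exists pr.
    rewrite <- (integral_eq_RiemannInt _ _ _ pr).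
    apply Rle_trans with (sqrt E0); [apply sqrt_le_1_alt; auto | lra].
Qed.
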